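(* Let $p$ be an odd prime and let $0<r,s<p$ be integers with $r+s\neq p$. Then \[ b_{r,s}(\alpha)=\sum_{k=0}^{p-1}(-r/s)^k\binom{r\alpha-1}{p-1-k}\binom{s\alpha}{k} \] in $\mathbb F_p[\alpha]$.
   Context: $\mathbb F_p$ is the field of $p$ elements, $\alpha$ an indeterminate, $\binom{x}{m}=x(x-1)\cdots(x-m+1)/m!$. For integers $0<r,s<p$ (interpreted as elements of $\mathbb F_p$), $b_{r,s}(\alpha)$ is defined as $b_{r,s}(\alpha)=\sum_{k=0}^{p-1}(-r/s)^k\binom{r\alpha-1}{p-1-k}\binom{s\alpha-1}{k}\in\mathbb F_p[\alpha]$. *)

From HB Require Import structures.
From mathcomp Require Import all_boot all_order all_algebra.
Set Implicit Arguments. Unset Strict Implicit. Unset Printing Implicit Defensive.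
Import GRing.Theory.
Local Open Scope ring_scope.

(* Generalized binomial coefficient of a polynomial x :
   binom(x, m) = x (x-1) ... (x-m+1) / m!  (the inverse of m! is the
   field inverse; in all uses here m <= p-1 so m! is a unit in F_p). *)
Definition binomP (F : fieldType) (x : {poly F}) (m : nat) : {poly F} :=
  (m`!%:R)^-1 *: \prod_(i < m) (x - (i%:R)%:P).

Definition b_rs (p r s : nat) : {poly 'F_p} :=
  \sum_(k < p) (- (r%:R) / (s%:R) : 'F_p) ^+ k *:
     (binomP (r%:R *: 'X - 1) (p.-1 - k) * binomP (s%:R *: 'X - 1) k).

From HB Require Import structures.
From mathcomp Require Import all_boot all_order all_algebra all_field.
From mathcomp Require Import ring zify.
Import GRing.Theory.
Local Open Scope ring_scope.

(* Put x = r alpha, y = s alpha and c = -r/s, so that x + c y = 0.  Pascal's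
   rule turns the right-hand side into b_{r,s} plus the shifted sum
     D = sum_{i < p-1} c^(i+1) binom(x-1, p-2-i) binom(y-1, i).
   Multiply D by x + y = (r+s) alpha, which is nonzero.  By the recursion
   (z - k) binom(z, k) = (k+1) binom(z, k+1), (x + y) D is the sum over j < p of
   c^j (c (p-1-j) + j) G_j, where G_j = binom(x-1, p-1-j) binom(y-1, j).  As
   x + c y = 0, the weight c (p-1-j) + j equals (x-1-(p-1-j)) + c (y-1-j), and
   the recursion splits each term in two; pieces of neighbouring terms cancel
   because the integer factors they acquire add up to p.  What survives are
   the ends x binom(x-1, p-1) = x - x^p (Wilson) and c (y - y^p), which cancel
   by the Frobenius: (x - x^p) + c (y - y^p) = (x + c y) - (x + c y)^p = 0. *)

Section StaggeredSums.
Variable V : nmodType.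

Lemma sumr_shift n (f g : nat -> V) : f n = 0 -> g 0%N = 0 ->
  \sum_(i < n) (f i + g i.+1) = \sum_(i < n.+1) (f i + g i).
Proof.
move=> fn0 g00; rewrite !big_split /=.
rewrite [in RHS]big_ord_recr [X in _ = _ + X]big_ord_recl /=.
by rewrite fn0 g00 addr0 add0r.
Qed.

Lemma sumr_staggered n (a b : nat -> V) :
  (forall i, (i < n)%N -> a i.+1 + b i = 0) ->
  \sum_(i < n.+1) (a i + b i) = a 0%N + b n.
Proof.
elim: n => [|n IHn] ab0; first by rewrite big_ord1.
rewrite big_ord_recr /= IHn => [|i lt_in]; last by rewrite ab0 // ltnW.
by rewrite addrA -(addrA _ (b n)) [b n + _]addrC ab0 // addr0.
Qed.

End StaggeredSums.

Section BinomialPolynomials.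
Variable F : fieldType.
Implicit Types (z : {poly F}) (k : nat).

Lemma binomP0 z : binomP z 0 = 1.
Proof. by rewrite /binomP big_ord0 fact0 invr1 scale1r. Qed.

Lemma scale_fact_binomP z k : k`!%:R != 0 :> F ->
  k`!%:R *: binomP z k = \prod_(i < k) (z - i%:R%:P).
Proof. by move=> fact_neq0; rewrite /binomP scalerA mulfV ?scale1r. Qed.

Lemma natr_fact_neq0_pred k : (k.+1)`!%:R != 0 :> F -> k`!%:R != 0 :> F.
Proof. by rewrite factS natrM mulf_eq0 negb_or => /andP[]. Qed.

Lemma binomP_recr z k : (k.+1)`!%:R != 0 :> F ->
  k.+1%:R *: binomP z k.+1 = (z - k%:R%:P) * binomP z k.
Proof.
move=> factS_neq0; have fact_neq0 := natr_fact_neq0_pred _ factS_neq0.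
apply: (scalerI fact_neq0); rewrite scalerA -natrM mulnC -factS scalerAr.
by rewrite !scale_fact_binomP // big_ord_recr mulrC.
Qed.

Lemma binomP_addr1 z k : (k.+1)`!%:R != 0 :> F ->
  binomP (z + 1) k.+1 = binomP z k.+1 + binomP z k.
Proof.
move=> factS_neq0; have fact_neq0 := natr_fact_neq0_pred _ factS_neq0.
apply: (scalerI factS_neq0); rewrite scalerDr !scale_fact_binomP //.
rewrite factS natrM -scalerA scale_fact_binomP // big_ord_recl big_ord_recr /=.
under eq_bigr => i _ do rewrite /bump add1n mulrS polyCD polyC1 addrKA.
by rewrite subr0 -mul_polyC mulrSr polyCD polyC1; ring.
Qed.

End BinomialPolynomials.

Section PrimeField.
Variable n : nat.
Hypothesis n1_prime : prime n.+1.
Local Notation p := n.+1.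

Lemma natr_Fp_neq0 k : (0 < k < p)%N -> k%:R != 0 :> 'F_p.
Proof.
by case/andP=> k_gt0 lt_kp; rewrite -(dvdn_pcharf (pchar_Fp n1_prime)) gtnNdvd.
Qed.

Lemma natr_fact_Fp_neq0 k : (k < p)%N -> k`!%:R != 0 :> 'F_p.
Proof.
elim: k => [|k IHk] lt_kp; first by rewrite fact0 oner_neq0.
rewrite factS natrM mulf_neq0 ?IHk ?(ltnW lt_kp) //.
exact: natr_Fp_neq0.
Qed.

Lemma natr_pred_Fp : n%:R = -1 :> 'F_p.
Proof. by apply/eqP; rewrite -addr_eq0 -mulrSr pchar_Fp_0. Qed.

Lemma natr_fact_pred_Fp : n`!%:R = -1 :> 'F_p.
Proof.
apply/eqP; rewrite -addr_eq0 -mulrSr -(dvdn_pcharf (pchar_Fp n1_prime)).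
by rewrite -Wilson ?prime_gt1.
Qed.

Lemma expr_Fp_card (a : 'F_p) : a ^+ p = a.
Proof. by rewrite -{2}(expf_card a) card_Fp. Qed.

Lemma prod_subr_natr_Fp (z : {poly 'F_p}) :
  \prod_(i < p) (z - i%:R%:P) = z ^+ p - z.
Proof.
have := congr1 (comp_poly z) (finField_genPoly 'F_p).
rewrite card_Fp // rmorphB rmorph_prod /= rmorphXn /= comp_polyX => ->.
rewrite -(big_mkord xpredT (fun i => z - i%:R%:P)).
rewrite -[in index_iota _ _](Fp_cast n1_prime) big_mkord.
by apply: eq_bigr => i _; rewrite comp_polyB comp_polyX comp_polyC natr_Zp.
Qed.

Lemma mul_binomP_pred (z : {poly 'F_p}) : z * binomP (z - 1) n = z - z ^+ p.
Proof.
rewrite /binomP natr_fact_pred_Fp invrN1 scaleN1r mulrN -[RHS]opprB.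
rewrite -prod_subr_natr_Fp big_ord_recl mulr0n polyC0 subr0; congr (- (_ * _)).
by apply: eq_bigr => i _; rewrite lift0 mulrS polyCD polyC1 opprD addrA.
Qed.

Lemma exprD_Fp (u v : {poly 'F_p}) : (u + v) ^+ p = u ^+ p + v ^+ p.
Proof.
have pchar_p : p \in [pchar {poly 'F_p}] by rewrite pchar_poly pchar_Fp.
by rewrite -!(pFrobenius_autE pchar_p) pFrobenius_autD_comm //; exact: mulrC.
Qed.

Lemma binomP_recr_Fp (z : {poly 'F_p}) k : (k < n)%N ->
  k.+1%:R *: binomP z k.+1 = (z - k%:R%:P) * binomP z k.
Proof. by move=> lt_kn; rewrite binomP_recr // natr_fact_Fp_neq0 ?ltnS. Qed.

Lemma binomP_addr1_Fp (z : {poly 'F_p}) k : (k < n)%N ->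
  binomP (z + 1) k.+1 = binomP z k.+1 + binomP z k.
Proof. by move=> lt_kn; rewrite binomP_addr1 // natr_fact_Fp_neq0 ?ltnS. Qed.

Lemma sum_binomP_addr1 (X y : {poly 'F_p}) (c : 'F_p) :
  \sum_(k < p) c ^+ k *: (binomP X (n - k) * binomP y k) =
  \sum_(k < p) c ^+ k *: (binomP X (n - k) * binomP (y - 1) k)
  + \sum_(i < n) c ^+ i.+1 *: (binomP X (n - i.+1) * binomP (y - 1) i).
Proof.
rewrite !big_ord_recl /= !binomP0 -addrA; congr (_ + _).
under eq_bigr => i _ do
  rewrite -{1}[y](subrK 1) binomP_addr1_Fp // mulrDr scalerDr.
by rewrite big_split.
Qed.

Section ShiftedConvolution.
Variables (x y : {poly 'F_p}) (c : 'F_p).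
Hypothesis xcy_eq0 : x + c *: y = 0.

Let G j := binomP (x - 1) (n - j) * binomP (y - 1) j.

Lemma mul_addxy_binomP i : (i < n)%N ->
  (x + y) * (binomP (x - 1) (n - i.+1) * binomP (y - 1) i)
  = (n - i)%:R *: G i + i.+1%:R *: G i.+1.
Proof.
move=> lt_in; rewrite /G -(subnSK lt_in); set m := (n - i.+1)%N.
have mi_eq0 : (m%:R + i.+2%:R)%:P = 0 :> {poly 'F_p}.
  by rewrite -natrD addnS subnK // pchar_Fp_0 // polyC0.
have -> : x + y = (x - 1 - m%:R%:P) + (y - 1 - i%:R%:P).
  by rewrite -[LHS]subr0 -mi_eq0 !mulrS !polyCD polyC1; ring.
rewrite mulrDl mulrA [(y - 1 - _) * _]mulrCA.
rewrite -!binomP_recr_Fp //; last by rewrite /m; lia.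
by rewrite -scalerAl -(scalerAr i.+1%:R).
Qed.

Lemma binomP_pair_cancel i : (i < n)%N ->
  c ^+ i.+1 *: ((x - 1 - (n - i.+1)%:R%:P) * G i.+1)
  + c ^+ i.+1 *: ((y - 1 - i%:R%:P) * G i) = 0.
Proof.
move=> lt_in; rewrite /G -(subnSK lt_in); set m := (n - i.+1)%N.
rewrite -scalerDr mulrA [(y - 1 - _) * _]mulrCA.
rewrite -!binomP_recr_Fp //; last by rewrite /m; lia.
rewrite -scalerAl -(scalerAr i.+1%:R) -scalerDl -natrD addSn subnK //.
by rewrite pchar_Fp_0 // scale0r scaler0.
Qed.

Lemma polyC_weight j : (j <= n)%N ->
  (c * (n - j)%:R + j%:R)%:P = (x - 1 - (n - j)%:R%:P) + c *: (y - 1 - j%:R%:P).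
Proof.
move=> le_jn; have -> : x = - (c *: y) by apply/eqP; rewrite -addr_eq0 xcy_eq0.
rewrite natrB // natr_pred_Fp -!mul_polyC.
by rewrite !(polyCD, polyCB, polyCM, polyCN, polyC1); ring.
Qed.

Lemma binomP_ends_cancel :
  (x - 1 - n%:R%:P) * G 0 + c ^+ n.+1 *: ((y - 1 - n%:R%:P) * G n) = 0.
Proof.
rewrite /G subn0 subnn !binomP0 mulr1 mul1r natr_pred_Fp polyCN polyC1 opprK.
rewrite !subrK !mul_binomP_pred expr_Fp_card scalerBr addrACA xcy_eq0 add0r.
by rewrite -opprD -(expr_Fp_card c) -exprZn -exprD_Fp xcy_eq0 expr0n oppr0.
Qed.

Lemma binomP_weight_split j : (j <= n)%N ->
  c ^+ j.+1 *: ((n - j)%:R *: G j) + c ^+ j *: (j%:R *: G j)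
  = c ^+ j *: ((x - 1 - (n - j)%:R%:P) * G j)
    + c ^+ j.+1 *: ((y - 1 - j%:R%:P) * G j).
Proof.
move=> le_jn; rewrite exprSr -!scalerA -!scalerDr; congr (_ *: _).
rewrite (scalerAl c (y - 1 - j%:R%:P)) -mulrDl -polyC_weight //.
by rewrite mul_polyC scalerDl scalerA.
Qed.

Lemma sum_binomP_shift_eq0 : x + y != 0 ->
  \sum_(i < n) c ^+ i.+1 *: (binomP (x - 1) (n - i.+1) * binomP (y - 1) i) = 0.
Proof.
move=> xy_neq0; apply: (mulfI xy_neq0); rewrite mulr0 mulr_sumr.
under eq_bigr => i _ do
  rewrite -(scalerAr (c ^+ i.+1)) mul_addxy_binomP // scalerDr.
rewrite (sumr_shift _ _ (fun j => c ^+ j.+1 *: ((n - j)%:R *: G j))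
                        (fun j => c ^+ j *: (j%:R *: G j))) /=; last 2 first.
- by rewrite subnn scale0r scaler0.
- by rewrite scale0r scaler0.
pose a j := c ^+ j *: ((x - 1 - (n - j)%:R%:P) * G j).
pose b j := c ^+ j.+1 *: ((y - 1 - j%:R%:P) * G j).
rewrite (eq_bigr (fun j : 'I_p => a j + b j)) => [|j _]; last first.
  by rewrite binomP_weight_split // -ltnS.
rewrite (sumr_staggered _ _ a b) => [|i]; last exact: binomP_pair_cancel.
by rewrite /a expr0 scale1r subn0 binomP_ends_cancel.
Qed.

End ShiftedConvolution.

End PrimeField.

Theorem lemma17 (p r s : nat) :
  prime p -> odd p -> (0 < r < p)%N -> (0 < s < p)%N -> (r + s != p)%N ->
  b_rs p r s =
  \sum_(k < p) (- (r%:R) / (s%:R) : 'F_p) ^+ k *: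
     (binomP (r%:R *: 'X - 1) (p.-1 - k) * binomP (s%:R *: 'X) k).
Proof.
move=> p_prime _ /andP[r_gt0 lt_rp] /andP[s_gt0 lt_sp] rs_neq_p.
case: p => [//|n] in p_prime lt_rp lt_sp rs_neq_p *.
have s_neq0 : s%:R != 0 :> 'F_n.+1 by rewrite natr_Fp_neq0 ?s_gt0.
rewrite /b_rs [RHS]sum_binomP_addr1 // sum_binomP_shift_eq0 ?addr0 //.
  by rewrite scalerA divfK // scaleNr subrr.
rewrite -scalerDl -natrD scaler_eq0 polyX_eq0 orbF.
rewrite -(dvdn_pcharf (pchar_Fp p_prime)); apply/negP => /dvdnP[q rs_eq].
by case: q rs_eq => [|[|q]]; lia.
Qed.
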